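(* Let $N_r,N_t,L$ be positive integers with $L\le\min\{N_r,N_t\}$, and let $\mathbf{H}\in\mathbb{C}^{N_r\times N_t}$, $\mathbf{H}\neq\mathbf{0}$, be a channel matrix of the form $\mathbf{H} = \sqrt{\tfrac{N_r N_t}{L}}\sum_{l=1}^{L} h_l\, \mathbf{a}_r(\theta_{r,l})\, \mathbf{a}_t(\theta_{t,l})^H$, with $\mathbf{H}=\mathbf{U}\boldsymbol{\Sigma}\mathbf{V}^H$ where $\mathbf{U}\in\mathbb{C}^{N_r\times L}$ and $\mathbf{V}\in\mathbb{C}^{N_t\times L}$ consist of the $L$ dominant left and right singular vectors of $\mathbf{H}$ and $\boldsymbol{\Sigma}\in\mathbb{R}^{L\times L}$ is diagonal with the $L$ largest singular values. Let $\widehat{\mathbf{U}}\in\mathbb{C}^{N_r\times L}$ and $\widehat{\mathbf{V}}\in\mathbb{C}^{N_t\times L}$ be the estimated column and row subspace matrices (each with orthonormal columns) produced by the two-stage procedure: $\widehat{\mathbf{U}}$ is the matrix of $L$ dominant left singular vectors of a noisy observation $\mathbf{Y}_S$ of the first $m$ columns of $\mathbf{H}$, and $\widehat{\mathbf{V}}$ is the matrix of $L$ dominant right singular vectors of the observation matrix $\widehat{\mathbf{Q}}$ of $\mathbf{H}$ taken through the combiner. Suppose the combiner and precoder equal these matrices exactly: $\widehat{\mathbf{W}}=\widehat{\mathbf{U}}$ and $\widehat{\mathbf{F}}=\widehat{\mathbf{V}}$. Then $$\eta(\widehat{\mathbf{W}},\widehat{\mathbf{F}}) := \frac{\|\widehat{\mathbf{W}}^H\mathbf{H}\widehat{\mathbf{F}}\|_F^2}{\operatorname{tr}(\mathbf{H}^H\mathbf{H})}\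 \ge\ \sigma_L^2(\widehat{\mathbf{U}}^H\mathbf{U})\,\sigma_L^2(\widehat{\mathbf{V}}^H\mathbf{V}).$$
   Context: $\mathbf{a}_r(\theta) = \frac{1}{\sqrt{N_r}}[1, e^{-j\pi\sin\theta}, \dots, e^{-j\pi (N_r-1)\sin\theta}]^T$, $\mathbf{a}_t(\theta) = \frac{1}{\sqrt{N_t}}[1, e^{-j\pi\sin\theta}, \dots, e^{-j\pi (N_t-1)\sin\theta}]^T$, $h_l\in\mathbb{C}$, $\theta_{r,l},\theta_{t,l}\in[-\pi/2,\pi/2)$; such $\mathbf{H}$ has rank at most $L$. $\sigma_L(\mathbf{X})$ denotes the $L$-th largest singular value of $\mathbf{X}$. *)

From HB Require Import structures.
From mathcomp Require Import all_boot all_order all_algebra.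
From mathcomp Require Import complex.
From mathcomp Require Import reals trigo.
Set Implicit Arguments. Unset Strict Implicit. Unset Printing Implicit Defensive.
Import Order.TTheory GRing.Theory Num.Theory.
Local Open Scope ring_scope.
Local Open Scope complex_scope.

Section Defs.
Variable R : realType.
Local Notation C := R[i].

Definition mxH m n (A : 'M[C]_(m, n)) : 'M[C]_(n, m) :=
  (map_mx (fun z : C => Num.conj z) A)^T.

Definition rdiag m n (s : seq C) : 'M[C]_(m, n) :=
  \matrix_(i < m, j < n) (if (i : nat) == j then s`_i else 0).

Definition is_svd m n (X : 'M[C]_(m, n)) (P : 'M[C]_m) (s : seq C) (Q : 'M[C]_n) :=
  [/\ mxH P *m P = 1%:M, mxH Q *m Q = 1%:M,
      size s = minn m n,
      all (fun x => 0 <= x) s /\ sorted (fun x y => y <= x) s &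
      X = P *m rdiag m n s *m mxH Q].

Definition singular_values m n (X : 'M[C]_(m, n)) (s : seq C) :=
  exists P Q, is_svd X P s Q.

Definition dominant_left m n L (Y : 'M[C]_(m, n)) (Uh : 'M[C]_(m, L)) :=
  (L <= m)%N /\ exists P s Q, is_svd Y P s Q /\
    forall i (j : 'I_L) (k : 'I_m), (k : nat) = j -> Uh i j = P i k.

Definition dominant_right m n L (Y : 'M[C]_(m, n)) (Vh : 'M[C]_(n, L)) :=
  (L <= n)%N /\ exists P s Q, is_svd Y P s Q /\
    forall i (j : 'I_L) (k : 'I_n), (k : nat) = j -> Vh i j = Q i k.

Definition frob2 m n (A : 'M[C]_(m, n)) : C :=
  \sum_i \sum_j `|A i j| ^+ 2.

(* array response vector a(theta) of an N-element ULA *)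
Definition steer (N : nat) (th : R) : 'cV[C]_N :=
  \col_(k < N) ((Num.sqrt (N%:R : R))^-1%:C *
     ((cos (pi * k%:R * sin th)) -i* (sin (pi * k%:R * sin th)))).

Definition eta Nr Nt L (W : 'M[C]_(Nr, L)) (H : 'M[C]_(Nr, Nt)) (F : 'M[C]_(Nt, L)) : C :=
  frob2 (mxH W *m H *m F) / \tr (mxH H *m H).

End Defs.

(* With A := Uh^H U and B := Vh^H V, the factorisation H = U Σ V^H gives
   Uh^H H Vh = A Σ B^H.  Unitary factors preserve the Frobenius norm, so
   multiplying by a square matrix X scales it by at least the smallest singular
   value of X; applied to A on the left and B^H on the right this yields
   ||Uh^H H Vh||_F^2 >= σ_L(A)^2 σ_L(B)^2 ||Σ||_F^2, and ||Σ||_F^2 = tr(H^H H)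
   because U and V have orthonormal columns.  Neither the channel model nor the
   way Uh and Vh are estimated plays any role. *)

From mathcomp Require Import all_boot all_order all_algebra.
From mathcomp Require Import complex.
From mathcomp Require Import reals trigo.
Set Implicit Arguments. Unset Strict Implicit. Unset Printing Implicit Defensive.
Import Order.TTheory GRing.Theory Num.Theory.
Local Open Scope ring_scope.
Local Open Scope complex_scope.

Section FrobeniusSVD.
Variable R : realType.
Local Notation C := R[i].

Lemma mxH_mul m n p (A : 'M[C]_(m, n)) (B : 'M[C]_(n, p)) :
  mxH (A *m B) = mxH B *m mxH A.
Proof. by rewrite /mxH map_mxM trmx_mul. Qed.

Lemma mxHK m n (A : 'M[C]_(m, n)) : mxH (mxH A) = A.
Proof. by apply/matrixP => i j; rewrite /mxH !mxE conjCK. Qed.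

Lemma frob2E m n (X : 'M[C]_(m, n)) : frob2 X = \tr (mxH X *m X).
Proof.
rewrite /frob2 /mxtrace exchange_big; apply: eq_bigr => j _.
by rewrite mxE; apply: eq_bigr => i _; rewrite /mxH !mxE normCK mulrC.
Qed.

Lemma frob2_mxH m n (X : 'M[C]_(m, n)) : frob2 (mxH X) = frob2 X.
Proof.
rewrite /frob2 exchange_big; apply: eq_bigr => i _; apply: eq_bigr => j _.
by rewrite /mxH !mxE norm_conjC.
Qed.

Lemma frob2_ge0 m n (X : 'M[C]_(m, n)) : 0 <= frob2 X.
Proof. by apply: sumr_ge0 => i _; apply: sumr_ge0 => j _; exact: exprn_ge0. Qed.

Lemma frob2_eq0 m n (X : 'M[C]_(m, n)) : (frob2 X == 0) = (X == 0).
Proof.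
apply/idP/eqP => [|->]; last first.
  by rewrite /frob2 big1 // => i _; rewrite big1 // => j _; rewrite mxE normr0 expr0n.
rewrite psumr_eq0 => [/allP X0|i _]; last by apply: sumr_ge0 => j _; exact: exprn_ge0.
apply/matrixP => i j; move: (X0 i (mem_index_enum i)).
rewrite psumr_eq0 => [/allP/(_ j (mem_index_enum j))|k _]; last exact: exprn_ge0.
by rewrite expf_eq0 normr_eq0 mxE => /eqP.
Qed.

Lemma frob2_gt0 m n (X : 'M[C]_(m, n)) : X != 0 -> 0 < frob2 X.
Proof. by rewrite lt_def frob2_eq0 frob2_ge0 andbT. Qed.

Lemma frob2_isometryl m n p (P : 'M[C]_(m, n)) (X : 'M[C]_(n, p)) :
  mxH P *m P = 1%:M -> frob2 (P *m X) = frob2 X.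
Proof.
by move=> PP; rewrite !frob2E mxH_mul -mulmxA (mulmxA (mxH P)) PP mul1mx.
Qed.

Lemma frob2_isometryr m n p (X : 'M[C]_(m, n)) (Q : 'M[C]_(p, n)) :
  mxH Q *m Q = 1%:M -> frob2 (X *m mxH Q) = frob2 X.
Proof.
by move=> QQ; rewrite -frob2_mxH mxH_mul mxHK frob2_isometryl // frob2_mxH.
Qed.

Lemma rdiag_mulmx n p (s : seq C) (X : 'M[C]_(n, p)) i j :
  (rdiag n n s *m X) i j = s`_i * X i j.
Proof.
rewrite mxE (bigD1 i) //= big1 ?addr0 => [|k ki]; first by rewrite mxE eqxx.
by rewrite mxE ifF ?mul0r //; apply: contraNF ki => /eqP/val_inj ->.
Qed.

Lemma frob2_rdiag_mulmx_ge n p (s : seq C) (c : C) (X : 'M[C]_(n, p)) :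
  0 <= c -> (forall i : 'I_n, c <= `|s`_i|) ->
  c ^+ 2 * frob2 X <= frob2 (rdiag n n s *m X).
Proof.
move=> c_ge0 c_le; rewrite /frob2 mulr_sumr; apply: ler_sum => i _.
rewrite mulr_sumr; apply: ler_sum => j _.
rewrite rdiag_mulmx normrM exprMn ler_wpM2r ?exprn_ge0 //.
by rewrite ler_pXn2r ?inE ?normr_ge0 ?c_le //; exact: le_trans (c_le i).
Qed.

Lemma svd_singular_value_ge0 m n (X : 'M[C]_(m, n)) P s Q :
  is_svd X P s Q -> forall k, 0 <= s`_k.
Proof.
case=> _ _ _ [s_ge0 _] _ k; have [ks|sk] := ltnP k (size s).
  exact: (all_nthP 0 s_ge0).
by rewrite nth_default.
Qed.

Lemma svd_last_singular_value_min n (X : 'M[C]_n) P s Q (i : 'I_n) :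
  is_svd X P s Q -> s`_n.-1 <= s`_i.
Proof.
case=> _ _ size_s [_ s_sorted] _.
have n_gt0 : (0 < n)%N by exact: leq_ltn_trans (ltn_ord i).
apply: (@sorted_leq_nth _ _ (@ge_trans _ C) (@lexx _ C) 0 s s_sorted i n.-1);
  rewrite ?inE ?size_s ?minnn.
- exact: ltn_ord.
- by rewrite prednK.
- by rewrite -ltnS prednK.
Qed.

Lemma frob2_svd_mulmx_ge n p (X : 'M[C]_n) P s Q (Y : 'M[C]_(n, p)) :
  is_svd X P s Q -> s`_n.-1 ^+ 2 * frob2 Y <= frob2 (X *m Y).
Proof.
move=> svdX; have s_ge0 := svd_singular_value_ge0 svdX.
case: (svdX) => PP QQ _ _ ->.
have QQ' : mxH (mxH Q) *m mxH Q = 1%:M by rewrite mxHK; exact: mulmx1C.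
rewrite -!mulmxA frob2_isometryl // -(frob2_isometryl Y QQ').
apply: frob2_rdiag_mulmx_ge => // i.
by rewrite ger0_norm //; exact: svd_last_singular_value_min svdX.
Qed.

Lemma frob2_mulmx_svd_ge m n (Y : 'M[C]_(m, n)) (X : 'M[C]_n) P s Q :
  is_svd X P s Q -> s`_n.-1 ^+ 2 * frob2 Y <= frob2 (Y *m mxH X).
Proof.
move=> svdX; rewrite -frob2_mxH -(frob2_mxH (_ *m _)) mxH_mul mxHK.
exact: frob2_svd_mulmx_ge svdX.
Qed.

Lemma frob2_compact_svd m n L (U : 'M[C]_(m, L)) (V : 'M[C]_(n, L)) s :
  mxH U *m U = 1%:M -> mxH V *m V = 1%:M ->
  frob2 (U *m rdiag L L s *m mxH V) = frob2 (rdiag L L s).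
Proof. by move=> UU VV; rewrite -mulmxA frob2_isometryl // frob2_isometryr. Qed.

End FrobeniusSVD.

Theorem lemma3 (R : realType) (Nr Nt L : nat)
  (hNr : (0 < Nr)%N) (hNt : (0 < Nt)%N) (hL0 : (0 < L)%N)
  (hL : (L <= minn Nr Nt)%N)
  (h : 'I_L -> R[i]) (thr tht : 'I_L -> R)
  (hthr : forall l, - (pi / 2) <= thr l < pi / 2)
  (htht : forall l, - (pi / 2) <= tht l < pi / 2)
  (H : 'M[R[i]]_(Nr, Nt))
  (hH : H = (Num.sqrt ((Nr * Nt)%:R / L%:R : R))%:C *:
             \sum_(l < L) (h l *: (steer Nr (thr l) *m mxH (steer Nt (tht l)))))
  (hH0 : H != 0)
  (sH : seq R[i]) (hsH : singular_values H sH)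
  (U : 'M[R[i]]_(Nr, L)) (V : 'M[R[i]]_(Nt, L))
  (hU : mxH U *m U = 1%:M) (hV : mxH V *m V = 1%:M)
  (hSVD : H = U *m rdiag L L sH *m mxH V)
  (m : nat) (hm : (m <= Nt)%N) (NS : 'M[R[i]]_(Nr, m)) (YS : 'M[R[i]]_(Nr, m))
  (hYS : YS = colsub (fun j : 'I_m => widen_ord hm j) H + NS)
  (Uh : 'M[R[i]]_(Nr, L)) (hUh : dominant_left YS Uh)
  (NQ : 'M[R[i]]_(L, Nt)) (Qh : 'M[R[i]]_(L, Nt))
  (hQh : Qh = mxH Uh *m H + NQ)
  (Vh : 'M[R[i]]_(Nt, L)) (hVh : dominant_right Qh Vh)
  (Wh : 'M[R[i]]_(Nr, L)) (Fh : 'M[R[i]]_(Nt, L))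
  (hW : Wh = Uh) (hF : Fh = Vh)
  (sU sV : seq R[i])
  (hsU : singular_values (mxH Uh *m U) sU)
  (hsV : singular_values (mxH Vh *m V) sV) :
  sU`_(L.-1) ^+ 2 * sV`_(L.-1) ^+ 2 <= eta Wh H Fh.
Proof.
subst Wh Fh; rewrite /eta -frob2E ler_pdivlMr ?frob2_gt0 //.
case: hsU => PU [QU svdA]; case: hsV => PV [QV svdB].
set S := rdiag L L sH.
have -> : mxH Uh *m H *m Vh = (mxH Uh *m U) *m (S *m mxH (mxH Vh *m V)).
  by rewrite hSVD mxH_mul mxHK !mulmxA.
rewrite hSVD frob2_compact_svd // -mulrA.
apply: le_trans (frob2_svd_mulmx_ge (S *m mxH (mxH Vh *m V)) svdA).
apply: ler_wpM2l; first exact: exprn_ge0 (svd_singular_value_ge0 svdA _).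
exact: frob2_mulmx_svd_ge svdB.
Qed.
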